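(* In the setting below, the Jacobian matrix $L=\left(\frac{\partial B_i}{\partial w_j}\right)_{i,j=1}^n$ of $(B_1,\dots,B_n)$ with respect to $(w_1,\dots,w_n)$ is, at every point of $W$, symmetric, strictly diagonally dominant (i.e. $|\partial B_i/\partial w_i|>\sum_{j\ne i}|\partial B_i/\partial w_j|$ for each $i$), and negative definite.
   Context: Setting: $T^*$ is a triangulation of a closed surface $S$ with vertex set $T^0$; $\Sigma=S\setminus N(T^0)$ where $N(T^0)$ is a small open regular disjoint neighborhood of $T^0$; $\Sigma$ has boundary components labeled $1,\dots,n$. $T=T^*\cap\Sigma$ is the ideal triangulation with ideal edges $E$ and ideal faces $F$; $ij$ denotes the ideal edge between boundary components $i,j$ and $ijk$ the ideal face adjacent to boundary components $i,j,k$. For each face $ijk$ and positive lengths $l_{ij},l_{jk},l_{ki}$ there is a right-angled hyperbolic hexagon, unique up to isometry, with pairwise non-adjacent sides of these lengths; $\theta_i^f$ is the length of the side of the hexagon of $f=ijk$ opposite to the side of length $l_{jk}$, i.e. $\cosh\theta_i^f=\frac{\cosh l_{jk}+\cosh l_{ki}\cosh l_{ij}}{\sinh l_{ki}\sinh l_{ij}}$. Fix $l^0\in\mathbb{R}_+^{|E|}$. $W=\{w\in\mathbb{R}^n: w_i+w_j>-\ln\cosh\frac{l^0_{ij}}{2}\ \forall ij\in E\}$; for $w\in W$, $l=w*l^0$ is given by $\cosh\frac{l_{ij}}{2}=e^{w_i+w_j}\cosh\frac{l^0_{ij}}{2}$, and $B_i(w)=\sum_{f\in F_i}\theta_i^f$,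 where $F_i$ is the set of faces adjacent to boundary component $i$ ($B_i$ is the length of boundary component $i$ of the glued hyperbolic surface). *)

From mathcomp Require Import all_boot.
From Stdlib Require Import Reals.
From Coquelicot Require Import Coquelicot.

Set Implicit Arguments.
Unset Strict Implicit.
Unset Printing Implicit Defensive.

Definition arcosh (y : R) : R := ln (y + sqrt (y * y - 1)).

(* Combinatorial (ideal) triangulation of a closed surface with n vertices
   (= n boundary components of Sigma).  Faces are triangles with corners
   labelled 0,1,2; [corner f k] is the vertex (boundary component) at corner
   k of face f, and [side f k] is the edge of f opposite to corner k.
   Each edge e has endpoints [ends1 e], [ends2 e] (loops allowed). *)
Record triangulation (n : nat) := Triangulation {
  face : finType;
  edge : finType;
  corner : face -> 'I_3 -> 'I_n;
  side : face -> 'I_3 -> edge;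
  ends1 : edge -> 'I_n;
  ends2 : edge -> 'I_n;
  side_ends : forall f k,
    (ends1 (side f k), ends2 (side f k)) = (corner f (ordS k), corner f (ordS (ordS k)))
    \/ (ends1 (side f k), ends2 (side f k)) = (corner f (ordS (ordS k)), corner f (ordS k));
  (* closed surface: every edge is a side of exactly two face-sides *)
  edge_two_sides : forall e, #|[set p : face * 'I_3 | side p.1 p.2 == e]| = 2%nat;
  vertex_used : forall i : 'I_n, exists f k, corner f k = i
}.

Open Scope R_scope.

Section Geometry.
Variables (n : nat) (T : triangulation n).

Definition inW (l0 : edge T -> R) (w : 'I_n -> R) : Prop :=
  forall e : edge T, w (ends1 e) + w (ends2 e) > - ln (cosh (l0 e / 2)).

Definition edge_length (l0 : edge T -> R) (w : 'I_n -> R) (e : edge T) : R :=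
  2 * arcosh (exp (w (ends1 e) + w (ends2 e)) * cosh (l0 e / 2)).

(* hexagon side length opposite the side of length a, the two other
   pairwise non-adjacent sides having lengths b, c *)
Definition hex_theta (a b c : R) : R :=
  arcosh ((cosh a + cosh b * cosh c) / (sinh b * sinh c)).

Definition theta (l0 : edge T -> R) (w : 'I_n -> R) (f : face T) (k : 'I_3) : R :=
  let l := edge_length l0 w in
  hex_theta (l (side f k)) (l (side f (ordS k))) (l (side f (ordS (ordS k)))).

(* B_i(w) : length of boundary component i = sum of theta over the corners of
   faces at vertex i *)
Definition Bfun (l0 : edge T -> R) (w : 'I_n -> R) (i : 'I_n) : R :=
  \big[Rplus/0]_(f : face T) \big[Rplus/0]_(k : 'I_3 | corner f k == i) theta l0 w f k.

End Geometry.

Definition upd (n : nat) (w : 'I_n -> R) (j : 'I_n) (t : R) : 'I_n -> R :=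
  fun i => if i == j then t else w i.

Definition jacB (n : nat) (T : triangulation n) (l0 : edge T -> R)
    (w : 'I_n -> R) (i j : 'I_n) : R :=
  Derive (fun t => Bfun l0 (upd w j t) i) (w j).

(* With [u_e = ln cosh (l_e / 2) = w_i + w_j + ln cosh (l0_e / 2)], differentiating the
   hexagon relation gives the derivatives of [theta] with respect to the [u] of the three
   sides in closed form, as algebraic functions of [x = cosh l > 1].  Collecting the sides
   incident to each corner, every face contributes a 3x3 matrix [d theta_a / d w_b] that is
   symmetric and whose negative diagonal strictly dominates its rows; both facts reduce to
   elementary inequalities in the [x]'s.  The Jacobian of [B] is the sum of these matrices
   placed at the vertices of the corners: symmetry survives, and so does strict diagonal
   dominance, because corners of a face at a common vertex only move mass from off-diagonal
   absolute values into the (signed) diagonal.  Finally a symmetric matrix with such a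
   dominant negative diagonal is negative definite, by
   [2 x_i D_ij x_j <= |D_ij| (x_i^2 + x_j^2)]. *)

From HB Require Import structures.
From mathcomp Require Import all_boot.
From Stdlib Require Import Reals Lra Psatz.
From Coquelicot Require Import Coquelicot.

Set Implicit Arguments.
Unset Strict Implicit.
Unset Printing Implicit Defensive.
Open Scope R_scope.

Lemma cosh_pos a : 0 < cosh a.
Proof. rewrite /cosh; have := exp_pos a; have := exp_pos (- a); lra. Qed.

Lemma cosh_sq_sub_sinh_sq a : cosh a * cosh a - sinh a * sinh a = 1.
Proof. rewrite /cosh /sinh exp_Ropp; have ? := exp_pos a; field; lra. Qed.

Lemma cosh_double a : cosh (2 * a) = 2 * cosh a * cosh a - 1.
Proof.
rewrite /cosh !exp_Ropp (_ : 2 * a = a + a) ?exp_plus; last ring.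
have ? := exp_pos a; field; lra.
Qed.

Lemma sinh_double a : sinh (2 * a) = 2 * sinh a * cosh a.
Proof.
rewrite /cosh /sinh !exp_Ropp (_ : 2 * a = a + a) ?exp_plus; last ring.
have ? := exp_pos a; field; lra.
Qed.

Lemma exp_arcosh y : 1 <= y -> exp (arcosh y) = y + sqrt (y * y - 1).
Proof.
move=> Hy; rewrite /arcosh exp_ln //.
have := sqrt_pos (y * y - 1); lra.
Qed.

Lemma exp_Ropp_arcosh y : 1 <= y -> exp (- arcosh y) = y - sqrt (y * y - 1).
Proof.
move=> Hy; rewrite exp_Ropp exp_arcosh //.
have Hs := sqrt_sqrt (y * y - 1) ltac:(nra).
have Hs0 := sqrt_pos (y * y - 1).
apply: (Rmult_eq_reg_l (y + sqrt (y * y - 1))); last lra.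
rewrite Rinv_r; [nra | lra].
Qed.

Lemma cosh_arcosh y : 1 <= y -> cosh (arcosh y) = y.
Proof. by move=> Hy; rewrite /cosh exp_arcosh // exp_Ropp_arcosh //; field. Qed.

Lemma sinh_arcosh y : 1 <= y -> sinh (arcosh y) = sqrt (y * y - 1).
Proof. by move=> Hy; rewrite /sinh exp_arcosh // exp_Ropp_arcosh //; field. Qed.

Lemma is_derive_arcosh y : 1 < y -> is_derive arcosh y (/ sqrt (y * y - 1)).
Proof.
move=> Hy.
have Hs := sqrt_lt_R0 (y * y - 1) ltac:(nra).
rewrite /arcosh; auto_derive; change (y * y + - (1)) with (y * y - 1).
- by split; [nra | split; lra].
- field; lra.
Qed.

Lemma arcosh_param y : 1 < y ->
  exists z, 1 < z /\ y = (z + / z) / 2 /\ sqrt (y * y - 1) = (z - / z) / 2.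
Proof.
move=> Hy; exists (exp (arcosh y)).
rewrite -{2}(@cosh_arcosh y) -?sinh_arcosh /cosh /sinh ?exp_Ropp; try lra.
by split=> //; rewrite exp_arcosh; [have := sqrt_pos (y * y - 1) | ]; lra.
Qed.

Lemma is_derive_cosh_comp (f : R -> R) t d : is_derive f t d ->
  is_derive (fun t => cosh (f t)) t (sinh (f t) * d).
Proof.
move=> Hf; have Hc : is_derive cosh (f t) (sinh (f t)).
  by apply/is_derive_Reals; apply: derivable_pt_lim_cosh.
by have := is_derive_comp _ _ t _ _ Hc Hf; rewrite /scal /= /mult /= Rmult_comm.
Qed.

Lemma is_derive_sinh_comp (f : R -> R) t d : is_derive f t d ->
  is_derive (fun t => sinh (f t)) t (cosh (f t) * d).
Proof.
move=> Hf; have Hs : is_derive sinh (f t) (cosh (f t)).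
  by apply/is_derive_Reals; apply: derivable_pt_lim_sinh.
by have := is_derive_comp _ _ t _ _ Hs Hf; rewrite /scal /= /mult /= Rmult_comm.
Qed.

Definition hex_ratio (a b c : R) := (cosh a + cosh b * cosh c) / (sinh b * sinh c).

Definition hex_det (xa xb xc : R) := xa * xa + xb * xb + xc * xc + 2 * xa * xb * xc - 1.

Lemma hex_det_pos xa xb xc : 1 < xa -> 1 < xb -> 1 < xc -> 0 < hex_det xa xb xc.
Proof.
move=> Ha Hb Hc; rewrite /hex_det.
have Hbc : 1 < xb * xc by nra.
have Habc : 1 < xa * (xb * xc) by nra.
nra.
Qed.

Lemma hex_ratio_sq_sub1 a b c : sinh b * sinh c <> 0 ->
  hex_ratio a b c * hex_ratio a b c - 1
  = hex_det (cosh a) (cosh b) (cosh c) / (sinh b * sinh c) ^ 2.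
Proof.
move=> Hbc.
have Hb : sinh b * sinh b = cosh b * cosh b - 1 by have := cosh_sq_sub_sinh_sq b; lra.
have Hc : sinh c * sinh c = cosh c * cosh c - 1 by have := cosh_sq_sub_sinh_sq c; lra.
have -> : hex_det (cosh a) (cosh b) (cosh c)
          = (cosh a + cosh b * cosh c) ^ 2 - (sinh b * sinh b) * (sinh c * sinh c).
  by rewrite Hb Hc /hex_det; ring.
rewrite /hex_ratio; field; split=> H; apply: Hbc; rewrite H; ring.
Qed.

Lemma sqrt_hex_ratio_sq_sub1 a b c : 0 < sinh b -> 0 < sinh c ->
  sqrt (hex_ratio a b c * hex_ratio a b c - 1)
  = sqrt (hex_det (cosh a) (cosh b) (cosh c)) / (sinh b * sinh c).
Proof.
move=> Hb Hc; have Hbc : 0 < sinh b * sinh c by nra.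
rewrite hex_ratio_sq_sub1; last lra.
rewrite sqrt_div_alt ?sqrt_pow2 //; nra.
Qed.

Lemma hex_ratio_gt1 a b c : 1 < cosh a -> 1 < cosh b -> 1 < cosh c ->
  0 < sinh b -> 0 < sinh c -> 1 < hex_ratio a b c.
Proof.
move=> Ha Hb Hc Hsb Hsc; have Hbc : 0 < sinh b * sinh c by nra.
have Hpos : 0 < hex_ratio a b c by apply: Rdiv_lt_0_compat; nra.
have := @hex_ratio_sq_sub1 a b c ltac:(lra).
have : 0 < hex_det (cosh a) (cosh b) (cosh c) / (sinh b * sinh c) ^ 2.
  by apply: Rdiv_lt_0_compat; [exact: hex_det_pos | nra].
nra.
Qed.

Lemma is_derive_hex_ratio (la lb lc : R -> R) da db dc t :
  is_derive la t da -> is_derive lb t db -> is_derive lc t dc ->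
  sinh (lb t) * sinh (lc t) <> 0 ->
  is_derive (fun t => hex_ratio (la t) (lb t) (lc t)) t
   (((sinh (la t) * da + (sinh (lb t) * db * cosh (lc t) + cosh (lb t) * (sinh (lc t) * dc)))
      * (sinh (lb t) * sinh (lc t))
     - (cosh (la t) + cosh (lb t) * cosh (lc t))
       * (cosh (lb t) * db * sinh (lc t) + sinh (lb t) * (cosh (lc t) * dc)))
     / (sinh (lb t) * sinh (lc t)) ^ 2).
Proof.
move=> Ha Hb Hc Hbc; rewrite /hex_ratio.
have Hmul := fun f g df dg Hf Hg =>
  @is_derive_mult R_AbsRing f g t df dg Hf Hg Rmult_comm.
apply: (is_derive_div (fun t => cosh (la t) + cosh (lb t) * cosh (lc t))
                      (fun t => sinh (lb t) * sinh (lc t))) => //.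
- apply: is_derive_plus; first exact: is_derive_cosh_comp.
  exact: Hmul (is_derive_cosh_comp Hb) (is_derive_cosh_comp Hc).
- exact: Hmul (is_derive_sinh_comp Hb) (is_derive_sinh_comp Hc).
Qed.

Lemma is_derive_twice_arcosh (E : R -> R) g t :
  is_derive E t (g * E t) -> 1 < E t ->
  is_derive (fun t => 2 * arcosh (E t)) t (2 * (g * E t / sqrt (E t * E t - 1))).
Proof.
move=> HE H1; apply: is_derive_scal.
by have := is_derive_comp _ _ t _ _ (is_derive_arcosh H1) HE; rewrite /scal /= /mult.
Qed.

Definition cosh_twice (E : R) := 2 * E * E - 1.

Lemma cosh_twice_gt1 E : 1 < E -> 1 < cosh_twice E.
Proof. by move=> HE; rewrite /cosh_twice; nra. Qed.

Lemma cosh_twice_arcosh E : 1 <= E -> cosh (2 * arcosh E) = cosh_twice E.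
Proof. by move=> HE; rewrite cosh_double cosh_arcosh. Qed.

Lemma sinh_twice_arcosh_gt0 E : 1 < E -> 0 < sinh (2 * arcosh E).
Proof.
move=> HE; rewrite sinh_double cosh_arcosh ?sinh_arcosh; try lra.
by have := sqrt_lt_R0 (E * E - 1) ltac:(nra); nra.
Qed.

(* For a hexagon with sides [x = cosh l] given as [xa] (opposite [theta]), [xb], [xc],
   these are the partial derivatives of [theta] with respect to [ln cosh (l / 2)] of the
   three sides. *)
Definition dtheta0 xa xb xc := 2 * (xa + 1) / sqrt (hex_det xa xb xc).
Definition dtheta1 xa xb xc := - 2 * (xc + xa * xb) / ((xb - 1) * sqrt (hex_det xa xb xc)).
Definition dtheta2 xa xb xc := - 2 * (xb + xa * xc) / ((xc - 1) * sqrt (hex_det xa xb xc)).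

Lemma is_derive_hex_theta_half (Ea Eb Ec : R -> R) ga gb gc t :
  is_derive Ea t (ga * Ea t) -> is_derive Eb t (gb * Eb t) -> is_derive Ec t (gc * Ec t) ->
  1 < Ea t -> 1 < Eb t -> 1 < Ec t ->
  let xa := cosh_twice (Ea t) in let xb := cosh_twice (Eb t) in let xc := cosh_twice (Ec t) in
  is_derive (fun t => hex_theta (2 * arcosh (Ea t)) (2 * arcosh (Eb t)) (2 * arcosh (Ec t))) t
    (ga * dtheta0 xa xb xc + gb * dtheta1 xa xb xc + gc * dtheta2 xa xb xc).
Proof.
move=> HEa HEb HEc Ha Hb Hc xa xb xc.
have Hsb := sinh_twice_arcosh_gt0 Hb; have Hsc := sinh_twice_arcosh_gt0 Hc.
have HQ : 1 < hex_ratio (2 * arcosh (Ea t)) (2 * arcosh (Eb t)) (2 * arcosh (Ec t)).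
  by apply: hex_ratio_gt1; rewrite // cosh_twice_arcosh; try lra; apply: cosh_twice_gt1.
have HQ' := is_derive_hex_ratio (is_derive_twice_arcosh HEa Ha)
  (is_derive_twice_arcosh HEb Hb) (is_derive_twice_arcosh HEc Hc) ltac:(nra).
have := is_derive_comp _ _ t _ _ (is_derive_arcosh HQ) HQ'.
rewrite /scal /= /mult /= => H; apply: (eq_ind _ _ H).
rewrite sqrt_hex_ratio_sq_sub1 // !cosh_twice_arcosh ?sinh_double ?cosh_arcosh ?sinh_arcosh; try lra.
rewrite /xa /xb /xc /dtheta0 /dtheta1 /dtheta2.
have := sqrt_lt_R0 _ (hex_det_pos (cosh_twice_gt1 Ha) (cosh_twice_gt1 Hb) (cosh_twice_gt1 Hc)).
move: (sqrt (hex_det _ _ _)) => s Hs.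
(* Writing [E = (z + /z) / 2] turns each remaining [sqrt (E * E - 1)] into [(z - /z) / 2]. *)
have [za [Hza [-> ->]]] := arcosh_param Ha.
have [zb [Hzb [-> ->]]] := arcosh_param Hb.
have [zc [Hzc [-> ->]]] := arcosh_param Hc.
rewrite /cosh_twice; field; clear -Hza Hzb Hzc Hs.
have Hsq z : 1 < z -> 0 < z * z - 1 /\ 0 < (z * z - 1) * (z * z - 1).
  by move=> Hz; have Hz2 : 0 < z * z - 1 by [nra]; split; nra.
have [? ?] := Hsq _ Hza; have [? ?] := Hsq _ Hzb; have [? ?] := Hsq _ Hzc.
repeat split; nra.
Qed.

Lemma hex_det_rot xa xb xc : hex_det xb xc xa = hex_det xa xb xc.
Proof. by rewrite /hex_det; ring. Qed.

Lemma hex_det_swap xa xb xc : hex_det xa xc xb = hex_det xa xb xc.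
Proof. by rewrite /hex_det; ring. Qed.

(* Both sides equal [2 (xc - xa - xb - 1) / ((xc - 1) sqrt (hex_det xa xb xc))]. *)
Lemma dtheta_rot xa xb xc : 1 < xa -> 1 < xb -> 1 < xc ->
  dtheta0 xa xb xc + dtheta2 xa xb xc = dtheta0 xb xc xa + dtheta1 xb xc xa.
Proof.
move=> Ha Hb Hc; rewrite /dtheta0 /dtheta1 /dtheta2 (hex_det_rot xa xb xc).
have Hs := sqrt_lt_R0 _ (hex_det_pos Ha Hb Hc).
by field; split; lra.
Qed.

Lemma Rabs_dtheta01_lt xa xb xc : 1 < xa -> 1 < xb -> 1 < xc ->
  Rabs (dtheta0 xa xb xc + dtheta1 xa xb xc) < - dtheta1 xa xb xc.
Proof.
move=> Ha Hb Hc; rewrite /dtheta0 /dtheta1.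
have := sqrt_lt_R0 _ (hex_det_pos Ha Hb Hc).
move: (sqrt _) => s Hs.
have Hk : 0 < 2 / ((xb - 1) * s) by apply: Rdiv_lt_0_compat; nra.
have -> : 2 * (xa + 1) / s + - 2 * (xc + xa * xb) / ((xb - 1) * s)
          = 2 / ((xb - 1) * s) * (xb - xa - xc - 1) by field; lra.
have -> : - (- 2 * (xc + xa * xb) / ((xb - 1) * s))
          = 2 / ((xb - 1) * s) * (xc + xa * xb) by field; lra.
rewrite Rabs_mult Rabs_pos_eq; last lra.
by apply: Rmult_lt_compat_l => //; apply: Rabs_def1; nra.
Qed.

Lemma Rabs_dtheta02_lt xa xb xc : 1 < xa -> 1 < xb -> 1 < xc ->
  Rabs (dtheta0 xa xb xc + dtheta2 xa xb xc) < - dtheta2 xa xb xc.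
Proof.
move=> Ha Hb Hc; have := Rabs_dtheta01_lt Ha Hc Hb.
by rewrite /dtheta0 /dtheta1 /dtheta2 hex_det_swap.
Qed.

HB.instance Definition _ := Monoid.isComLaw.Build R 0 Rplus
  (fun x y z => esym (Rplus_assoc x y z)) Rplus_comm Rplus_0_l.
HB.instance Definition _ := Monoid.isMulLaw.Build R 0 Rmult Rmult_0_l Rmult_0_r.
HB.instance Definition _ := Monoid.isAddLaw.Build R Rmult Rplus
  Rmult_plus_distr_r Rmult_plus_distr_l.

Section RealSums.
Variable I : Type.
Implicit Types (r : seq I) (P : pred I) (F G : I -> R).

Lemma Rle_sum r P F G : (forall i, P i -> F i <= G i) ->
  \big[Rplus/0]_(i <- r | P i) F i <= \big[Rplus/0]_(i <- r | P i) G i.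
Proof.
move=> FG; elim/big_rec2: _ => [|i x y Pi]; first lra.
by have := FG i Pi; lra.
Qed.

Lemma Rabs_sum_le r P F :
  Rabs (\big[Rplus/0]_(i <- r | P i) F i) <= \big[Rplus/0]_(i <- r | P i) Rabs (F i).
Proof.
elim/big_rec2: _ => [|i x y _ Hxy]; first by rewrite Rabs_R0; lra.
by have := Rabs_triang (F i) y; lra.
Qed.

Lemma Rsum_ge0 r P F : (forall i, P i -> 0 <= F i) -> 0 <= \big[Rplus/0]_(i <- r | P i) F i.
Proof. by move=> F0; elim/big_rec: _ => [|i x Pi]; [lra | have := F0 i Pi; lra]. Qed.

Lemma Rsum_le0 r P F : (forall i, P i -> F i <= 0) -> \big[Rplus/0]_(i <- r | P i) F i <= 0.
Proof. by move=> F0; elim/big_rec: _ => [|i x Pi]; [lra | have := F0 i Pi; lra]. Qed.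

Lemma is_derive_sum r P (F : I -> R -> R) (dF : I -> R) t :
  (forall i, P i -> is_derive (F i) t (dF i)) ->
  is_derive (fun t => \big[Rplus/0]_(i <- r | P i) F i t) t (\big[Rplus/0]_(i <- r | P i) dF i).
Proof.
move=> HF; elim: r => [|i r IH].
  by rewrite big_nil; apply: (is_derive_ext (fun _ => 0)) => [s|]; rewrite ?big_nil //;
     apply: is_derive_const.
rewrite big_cons; case Pi: (P i).
- apply: (is_derive_ext (fun s => F i s + \big[Rplus/0]_(j <- r | P j) F j s)).
    by move=> s; rewrite big_cons Pi.
  exact: (is_derive_plus (F i) _ _ _ _ (HF i Pi) IH).
- by apply: (is_derive_ext _ _ _ _ _ IH) => s; rewrite big_cons Pi.
Qed.
End RealSums.

Lemma Rsum_lt0 (I : finType) (P : pred I) (F : I -> R) i0 :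
  (forall i, P i -> F i <= 0) -> P i0 -> F i0 < 0 -> \big[Rplus/0]_(i | P i) F i < 0.
Proof.
move=> F0 Pi0 Fi0; rewrite (bigD1 i0) //=.
have : \big[Rplus/0]_(i | P i && (i != i0)) F i <= 0.
  by apply: Rsum_le0 => i /andP[Pi _]; apply: F0.
lra.
Qed.

Lemma quad_form_lt0 n (D : 'I_n -> 'I_n -> R) (x : 'I_n -> R) :
  (forall i j, D i j = D j i) ->
  (forall i, D i i + \big[Rplus/0]_(j : 'I_n | j != i) Rabs (D i j) < 0) ->
  (exists i, x i <> 0) ->
  \big[Rplus/0]_(i : 'I_n) \big[Rplus/0]_(j : 'I_n) (x i * D i j * x j) < 0.
Proof.
move=> Dsym Ddom [i0 xi0].
pose c i j := if i == j then D i i else Rabs (D i j).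
have c_sym i j : c i j = c j i.
  by rewrite /c eq_sym; case: eqP => [->|_] //; rewrite Dsym.
have c_row i : \big[Rplus/0]_j c i j = D i i + \big[Rplus/0]_(j : 'I_n | j != i) Rabs (D i j).
  rewrite (bigD1 i) //= /c eqxx; congr (_ + _).
  by apply: eq_bigr => j; rewrite eq_sym => /negbTE ->.
have amgm i j : x i * D i j * x j + x i * D i j * x j
                <= c i j * (x i * x i) + c j i * (x j * x j).
  rewrite (c_sym j i) /c; case: eqP => [<-|_]; first lra.
  have := Rle_abs (x i * D i j * x j); rewrite !Rabs_mult.
  have := Rmult_le_pos _ _ (Rabs_pos (D i j)) (pow2_ge_0 (Rabs (x i) - Rabs (x j))).
  have := Rsqr_abs (x i); have := Rsqr_abs (x j); rewrite /Rsqr => -> -> ? ?; nra.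
set S := \big[Rplus/0]_(i : 'I_n) \big[Rplus/0]_(j : 'I_n) (c i j * (x i * x i)).
have S_swap : \big[Rplus/0]_(i : 'I_n) \big[Rplus/0]_(j : 'I_n) (c j i * (x j * x j)) = S.
  by rewrite exchange_big.
have S_lt0 : S < 0.
  rewrite /S (eq_bigr (fun i => (\big[Rplus/0]_j c i j) * (x i * x i))); last first.
    by move=> i _; rewrite big_distrl.
  apply: (Rsum_lt0 (i0 := i0)) => // [i _|]; rewrite c_row.
    by have := Ddom i; have := pow2_ge_0 (x i); nra.
  have xi0_sq : 0 < x i0 * x i0 by nra.
  by have := Ddom i0; nra.
have : \big[Rplus/0]_i \big[Rplus/0]_j (x i * D i j * x j + x i * D i j * x j) <=
       \big[Rplus/0]_i \big[Rplus/0]_j (c i j * (x i * x i) + c j i * (x j * x j)).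
  by apply: Rle_sum => i _; apply: Rle_sum => j _; apply: amgm.
rewrite (eq_bigr _ (fun i _ => big_split _ _ _ _ _)) big_split /=.
rewrite [in X in _ <= X](eq_bigr _ (fun i _ => big_split _ _ _ _ _)) big_split /= S_swap.
rewrite -/S; lra.
Qed.

Definition o0 : 'I_3 := @Ordinal 3 0 isT.
Definition o1 : 'I_3 := @Ordinal 3 1 isT.
Definition o2 : 'I_3 := @Ordinal 3 2 isT.

Lemma ord3P (P : 'I_3 -> Prop) : P o0 -> P o1 -> P o2 -> forall a, P a.
Proof.
move=> P0 P1 P2 [[|[|[|m]]] Hm] //.
- by rewrite (_ : Ordinal Hm = o0) //; apply: val_inj.
- by rewrite (_ : Ordinal Hm = o1) //; apply: val_inj.
- by rewrite (_ : Ordinal Hm = o2) //; apply: val_inj.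
Qed.

Lemma ordS_o0 : ordS o0 = o1. Proof. exact: val_inj. Qed.
Lemma ordS_o1 : ordS o1 = o2. Proof. exact: val_inj. Qed.
Lemma ordS_o2 : ordS o2 = o0. Proof. exact: val_inj. Qed.
Definition ordS_o := (ordS_o0, ordS_o1, ordS_o2).

Lemma ordS3 (k : 'I_3) : ordS (ordS (ordS k)) = k.
Proof. by move: k; apply: ord3P; rewrite !ordS_o. Qed.

Lemma ordS_eq (k : 'I_3) : (ordS k == k) = false.
Proof. by move: k; apply: ord3P. Qed.

Lemma ordS2_eq (k : 'I_3) : (ordS (ordS k) == k) = false.
Proof. by move: k; apply: ord3P. Qed.

Lemma ordS2_eqS (k : 'I_3) : (ordS (ordS k) == ordS k) = false.
Proof. by move: k; apply: ord3P. Qed.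

Lemma big_ord3 (P : pred 'I_3) (F : 'I_3 -> R) : \big[Rplus/0]_(i | P i) F i =
  (if P o0 then F o0 else 0) + (if P o1 then F o1 else 0) + (if P o2 then F o2 else 0).
Proof.
rewrite big_mkcond !big_ord_recl big_ord0 /= Rplus_0_r -Rplus_assoc.
by congr (_ + _ + _); congr (if P _ then F _ else _); apply: val_inj.
Qed.

Lemma big_ord3_rot (k : 'I_3) (F : 'I_3 -> R) :
  \big[Rplus/0]_(i : 'I_3) F i = F k + F (ordS k) + F (ordS (ordS k)).
Proof. by rewrite big_ord3; move: k; apply: ord3P; rewrite !ordS_o /=; ring. Qed.

Lemma big_ord3_neq (F : 'I_3 -> R) (a : 'I_3) :
  \big[Rplus/0]_(b | b != a) F b = F (ordS a) + F (ordS (ordS a)).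
Proof. by rewrite big_ord3; move: a; apply: ord3P; rewrite /= !ordS_o; ring. Qed.

Lemma big_ord3_pairs (beta H : 'I_3 -> R) :
  \big[Rplus/0]_(m : 'I_3) ((beta (ordS m) + beta (ordS (ordS m))) * H m)
  = \big[Rplus/0]_(b : 'I_3) (beta b * \big[Rplus/0]_(m | m != b) H m).
Proof. by rewrite !big_ord3 /= !ordS_o; ring. Qed.

Definition dtheta (x : 'I_3 -> R) (a m : 'I_3) : R :=
  let xa := x a in let xb := x (ordS a) in let xc := x (ordS (ordS a)) in
  if m == a then dtheta0 xa xb xc
  else if m == ordS a then dtheta1 xa xb xc else dtheta2 xa xb xc.

(* The side [m] joins the two corners other than [m], so the variable at corner [b]
   moves exactly the sides [m != b]. *)
Definition face_jac (x : 'I_3 -> R) (a b : 'I_3) : R :=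
  \big[Rplus/0]_(m | m != b) dtheta x a m.

Lemma face_jac_diag x a : let: (xa, xb, xc) := (x a, x (ordS a), x (ordS (ordS a))) in
  face_jac x a a = dtheta1 xa xb xc + dtheta2 xa xb xc.
Proof. by rewrite /face_jac big_ord3_neq /dtheta ordS_eq ordS2_eq ordS2_eqS eqxx. Qed.

Lemma face_jac_next x a : let: (xa, xb, xc) := (x a, x (ordS a), x (ordS (ordS a))) in
  face_jac x a (ordS a) = dtheta0 xa xb xc + dtheta2 xa xb xc.
Proof.
rewrite /face_jac big_ord3_neq ordS3 /dtheta ordS2_eq ordS2_eqS eqxx; exact: Rplus_comm.
Qed.

Lemma face_jac_prev x a : let: (xa, xb, xc) := (x a, x (ordS a), x (ordS (ordS a))) in
  face_jac x a (ordS (ordS a)) = dtheta0 xa xb xc + dtheta1 xa xb xc.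
Proof. by rewrite /face_jac big_ord3_neq !ordS3 /dtheta ordS_eq !eqxx. Qed.

Lemma face_jac_next_sym x a : (forall m, 1 < x m) ->
  face_jac x a (ordS a) = face_jac x (ordS a) a.
Proof.
move=> Hx; have := face_jac_prev x (ordS a); rewrite ordS3 face_jac_next => ->.
exact: dtheta_rot.
Qed.

Lemma face_jac_sym x a b : (forall m, 1 < x m) -> face_jac x a b = face_jac x b a.
Proof.
move=> Hx; have S0 := face_jac_next_sym o0 Hx; have S1 := face_jac_next_sym o1 Hx.
have S2 := face_jac_next_sym o2 Hx; rewrite !ordS_o in S0 S1 S2.
by move: a b; apply: ord3P; apply: ord3P.
Qed.

Lemma face_jac_diag_dom x a : (forall m, 1 < x m) ->
  face_jac x a a + \big[Rplus/0]_(b | b != a) Rabs (face_jac x a b) < 0.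
Proof.
move=> Hx; rewrite big_ord3_neq face_jac_diag face_jac_next face_jac_prev.
have := Rabs_dtheta01_lt (Hx a) (Hx (ordS a)) (Hx (ordS (ordS a))).
have := Rabs_dtheta02_lt (Hx a) (Hx (ordS a)) (Hx (ordS (ordS a))).
lra.
Qed.

Definition indR (b : bool) : R := if b then 1 else 0.

Lemma upd_id n (w : 'I_n -> R) j i : upd w j (w j) i = w i.
Proof. by rewrite /upd; case: eqP => [->|]. Qed.

Lemma is_derive_upd n (w : 'I_n -> R) j i t :
  is_derive (fun t => upd w j t i) t (indR (i == j)).
Proof. by rewrite /upd /indR; case: (i == j); [apply: is_derive_id | apply: is_derive_const]. Qed.

Section Triangulation.
Variables (n : nat) (T : triangulation n) (l0 : edge T -> R).

Definition cosh_half_len (w : 'I_n -> R) (e : edge T) : R :=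
  exp (w (ends1 e) + w (ends2 e)) * cosh (l0 e / 2).

Definition face_cosh (w : 'I_n -> R) (f : face T) (m : 'I_3) : R :=
  cosh_twice (cosh_half_len w (side f m)).

Lemma cosh_half_len_gt1 w e : inW l0 w -> 1 < cosh_half_len w e.
Proof.
move=> Hw; have Hc := cosh_pos (l0 e / 2).
have := exp_increasing _ _ (Hw e); rewrite exp_Ropp exp_ln // => He.
have := Rmult_lt_compat_r _ _ _ Hc He.
by rewrite /cosh_half_len Rinv_l //; lra.
Qed.

Lemma face_cosh_gt1 w f m : inW l0 w -> 1 < face_cosh w f m.
Proof. by move=> Hw; apply/cosh_twice_gt1/cosh_half_len_gt1. Qed.

Lemma is_derive_cosh_half_len w j t e :
  is_derive (fun t => cosh_half_len (upd w j t) e) t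
    ((indR (ends1 e == j) + indR (ends2 e == j)) * cosh_half_len (upd w j t) e).
Proof.
have Hsum := is_derive_plus _ _ t _ _ (is_derive_upd w j (ends1 e) t) (is_derive_upd w j (ends2 e) t).
have Hexp := is_derive_comp _ _ t _ _ (is_derive_exp _) Hsum.
have := is_derive_scal_l _ t _ (cosh (l0 e / 2)) Hexp.
by rewrite /cosh_half_len /scal /plus /= /mult /= => H; apply: (eq_ind _ _ H); ring.
Qed.

Lemma side_ends_indR (f : face T) m j :
  indR (ends1 (side f m) == j) + indR (ends2 (side f m) == j)
  = indR (corner f (ordS m) == j) + indR (corner f (ordS (ordS m)) == j).
Proof. by case: (side_ends f m) => -[-> ->] //; rewrite Rplus_comm. Qed.

Lemma is_derive_theta w j f k : inW l0 w ->
  is_derive (fun t => theta l0 (upd w j t) f k) (w j)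
    (\big[Rplus/0]_(b : 'I_3) (indR (corner f b == j) * face_jac (face_cosh w f) k b)).
Proof.
move=> Hw.
have Hupd e : cosh_half_len (upd w j (w j)) e = cosh_half_len w e.
  by rewrite /cosh_half_len !upd_id.
have Hgt1 e : 1 < cosh_half_len (upd w j (w j)) e by rewrite Hupd; apply: cosh_half_len_gt1.
have := is_derive_hex_theta_half
  (is_derive_cosh_half_len w j (w j) (side f k))
  (is_derive_cosh_half_len w j (w j) (side f (ordS k)))
  (is_derive_cosh_half_len w j (w j) (side f (ordS (ordS k)))) (Hgt1 _) (Hgt1 _) (Hgt1 _).
move=> H; apply: (eq_ind _ _ H).
rewrite -big_ord3_pairs (big_ord3_rot k) !side_ends_indR !Hupd ordS3.
rewrite /dtheta eqxx ordS_eq ordS2_eq ordS2_eqS eqxx /face_cosh.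
ring.
Qed.
End Triangulation.

Lemma sum_fiber_le (I : finType) (U : eqType) (c : I -> U) (M : I -> R) a :
  \big[Rplus/0]_(b | c b == c a) M b + \big[Rplus/0]_(b | c b != c a) Rabs (M b)
  <= M a + \big[Rplus/0]_(b | b != a) Rabs (M b).
Proof.
rewrite (bigD1 a) //= [X in _ <= _ + X](bigID (fun b => c b == c a)) /=.
have -> : \big[Rplus/0]_(b | (b != a) && (c b != c a)) Rabs (M b)
          = \big[Rplus/0]_(b | c b != c a) Rabs (M b).
  by apply: eq_bigl => b; case: eqP => [->|]; rewrite ?eqxx.
have : \big[Rplus/0]_(b | (c b == c a) && (b != a)) M b
       <= \big[Rplus/0]_(b | (b != a) && (c b == c a)) Rabs (M b).
  rewrite (eq_bigl (fun b => (b != a) && (c b == c a))) => [|b]; last by rewrite andbC.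
  by apply: Rle_sum => b _; apply: Rle_abs.
lra.
Qed.

Section Jacobian.
Variables (n : nat) (T : triangulation n) (l0 : edge T -> R).

Definition jac_faces (w : 'I_n -> R) (i j : 'I_n) : R :=
  \big[Rplus/0]_(f : face T) \big[Rplus/0]_(a | corner f a == i)
    \big[Rplus/0]_(b | corner f b == j) face_jac (face_cosh l0 w f) a b.

Lemma is_derive_Bfun w i j : inW l0 w ->
  is_derive (fun t => Bfun l0 (upd w j t) i) (w j) (jac_faces w i j).
Proof.
move=> Hw; apply: is_derive_sum => f _; apply: is_derive_sum => a _.
apply: (eq_ind _ _ (is_derive_theta j f a Hw)).
by rewrite [RHS]big_mkcond; apply: eq_bigr => b _; rewrite /indR; case: ifP => _; ring.
Qed.

Lemma jac_faces_sym w i j : inW l0 w -> jac_faces w i j = jac_faces w j i.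
Proof.
move=> Hw; apply: eq_bigr => f _; rewrite exchange_big.
apply: eq_bigr => a _; apply: eq_bigr => b _.
by apply: face_jac_sym => m; apply: face_cosh_gt1.
Qed.

Lemma jac_faces_off_diag_le w i :
  \big[Rplus/0]_(j : 'I_n | j != i) Rabs (jac_faces w i j) <=
  \big[Rplus/0]_(f : face T) \big[Rplus/0]_(a | corner f a == i)
    \big[Rplus/0]_(b | corner f b != i) Rabs (face_jac (face_cosh l0 w f) a b).
Proof.
apply: (Rle_trans _ (\big[Rplus/0]_(j : 'I_n | j != i) \big[Rplus/0]_(f : face T)
   \big[Rplus/0]_(a | corner f a == i) \big[Rplus/0]_(b | corner f b == j)
     Rabs (face_jac (face_cosh l0 w f) a b))).
  apply: Rle_sum => j _; apply: (Rle_trans _ _ _ (Rabs_sum_le _ _ _)).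
  apply: Rle_sum => f _; apply: (Rle_trans _ _ _ (Rabs_sum_le _ _ _)).
  by apply: Rle_sum => a _; apply: Rabs_sum_le.
right; rewrite exchange_big; apply: eq_bigr => f _.
rewrite exchange_big; apply: eq_bigr => a _.
rewrite [RHS](partition_big (corner f) (fun j => j != i)) //.
by apply: eq_bigr => j Hj; apply: eq_bigl => b; case: eqP => [->|]; rewrite ?Hj ?andbF.
Qed.

Lemma jac_faces_diag_dom w i : inW l0 w ->
  jac_faces w i i + \big[Rplus/0]_(j : 'I_n | j != i) Rabs (jac_faces w i j) < 0.
Proof.
move=> Hw; set M := fun f => face_jac (face_cosh l0 w f).
have face_row f a : corner f a = i ->
    \big[Rplus/0]_(b | corner f b == i) M f a b
    + \big[Rplus/0]_(b | corner f b != i) Rabs (M f a b) < 0.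
  move=> <-; apply: (Rle_lt_trans _ _ _ (sum_fiber_le _ _ _)).
  by apply: face_jac_diag_dom => m; apply: face_cosh_gt1.
have [f0 [a0 Hf0]] := vertex_used T i.
apply: (Rle_lt_trans _ _ _ (Rplus_le_compat_l _ _ _ (jac_faces_off_diag_le w i))).
rewrite /jac_faces -big_split /=; apply: (Rsum_lt0 (i0 := f0)) => // [f _|];
  rewrite -big_split /=.
- by apply: Rsum_le0 => a /eqP Ha; apply/Rlt_le/face_row.
- apply: (Rsum_lt0 (i0 := a0)) => [a /eqP Ha||]; rewrite ?Hf0 //; last exact: face_row.
  exact/Rlt_le/face_row.
Qed.
End Jacobian.

Lemma Rabs_gt_of_add_lt0 a s : 0 <= s -> a + s < 0 -> Rabs a > s.
Proof. by move=> s_ge0 as_lt0; rewrite Rabs_left; lra. Qed.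

Unset Implicit Arguments.

Theorem lemma3p1 (n : nat) (T : triangulation n) (l0 : edge T -> R)
  (Hl0 : forall e, 0 < l0 e) (w : 'I_n -> R) (Hw : inW l0 w) :
  (* the partial derivatives exist *)
  (forall i j : 'I_n, ex_derive (fun t => Bfun l0 (upd w j t) i) (w j)) /\
  (* symmetric *)
  (forall i j : 'I_n, jacB l0 w i j = jacB l0 w j i) /\
  (* strictly diagonally dominant *)
  (forall i : 'I_n,
     Rabs (jacB l0 w i i) > \big[Rplus/0]_(j : 'I_n | j != i) Rabs (jacB l0 w i j)) /\
  (* negative definite *)
  (forall x : 'I_n -> R, (exists i, x i <> 0) ->
     \big[Rplus/0]_(i : 'I_n) \big[Rplus/0]_(j : 'I_n) (x i * jacB l0 w i j * x j) < 0).
Proof.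
have jacB_eq i j : jacB l0 w i j = jac_faces l0 w i j.
  exact/is_derive_unique/is_derive_Bfun.
split; [|split; [|split]].
- by move=> i j; exists (jac_faces l0 w i j); apply: is_derive_Bfun.
- by move=> i j; rewrite !jacB_eq; apply: jac_faces_sym.
- move=> i; rewrite jacB_eq (eq_bigr (fun j => Rabs (jac_faces l0 w i j))) => [|j _]; last first.
    by rewrite jacB_eq.
  apply: Rabs_gt_of_add_lt0; last exact: jac_faces_diag_dom.
  by apply: Rsum_ge0 => j _; apply: Rabs_pos.
- move=> x Hx; under eq_bigr do under eq_bigr do rewrite jacB_eq.
  by apply: quad_form_lt0 => // [i j|i]; [apply: jac_faces_sym | apply: jac_faces_diag_dom].
Qed.
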